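(* Let $n_1,n_2$ be nonnegative integers, and consider the walks of minimal length from $(0,0)$ to $(n_1,n_2)$ that stay in the first quadrant and use steps from $\{E,W,NE,SW\}$; let $s(n_1,n_2)$ be the number of such shortest walks. (i) If $n_1\ge n_2$, then every shortest walk uses only $E$ and $NE$ steps, the shortest length is $n_1$, and $F(n_1;\,n_1,n_2)=s(n_1,n_2)=\binom{n_1}{n_2}$. (ii) If $n_1\le n_2$, then every shortest walk uses only $W$ and $NE$ steps, the shortest length is $2n_2-n_1$, and $F(2n_2-n_1;\,n_1,n_2)=s(n_1,n_2)=\frac{n_1+1}{2n_2-n_1+1}\binom{2n_2-n_1+1}{n_2+1}$.
   Context: Steps are $E=(1,0)$, $W=(-1,0)$, $NE=(1,1)$, $SW=(-1,-1)$. $F(m;\,n_1,n_2)$ denotes the number of lattice walks from $(0,0)$ to $(n_1,n_2)$ that always stay in the first quadrant $\{(a,b): a\ge 0,\ b\ge 0\}$ and have exactly $m$ steps, each belonging to $\{E,W,NE,SW\}$. *)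

From HB Require Import structures.
From mathcomp Require Import all_boot all_order all_algebra.
Set Implicit Arguments. Unset Strict Implicit. Unset Printing Implicit Defensive.
Import GRing.Theory Num.Theory.
Local Open Scope ring_scope.

Inductive step := E | W | NE | SW.

Definition step_to (s : step) : 'I_4 :=
  match s with E => inord 0 | W => inord 1 | NE => inord 2 | SW => inord 3 end.
Definition step_of (i : 'I_4) : step :=
  match val i with 0 => E | 1 => W | 2 => NE | _ => SW end.
Lemma step_toK : cancel step_to step_of.
Proof. by case; rewrite /step_of /= inordK. Qed.
HB.instance Definition _ := Finite.copy step (can_type step_toK).

Definition delta (s : step) : int * int :=
  match s with
  | E => (1, 0) | W => (-1, 0)
  | NE => (1, 1) | SW => (-1, -1)
  end.

Definition endpt (ws : seq step) : int * int :=
  foldl (fun p s => ((p.1 + (delta s).1)%R, (p.2 + (delta s).2)%R)) ((0:int), (0:int)) ws.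

Definition in_quadrant (ws : seq step) : bool :=
  all (fun k => (0 <= (endpt (take k ws)).1)%R && (0 <= (endpt (take k ws)).2)%R)
      (iota 0 (size ws).+1).

Definition qwalk (m n1 n2 : nat) (w : m.-tuple step) : bool :=
  in_quadrant w && (endpt w == (n1%:Z, n2%:Z)).

Definition F (m n1 n2 : nat) : nat := #|[pred w : m.-tuple step | qwalk n1 n2 w]|%N.

(* L is the minimal length of a quadrant walk from (0,0) to (n1,n2);
   the number of shortest walks s(n1,n2) is then F L n1 n2. *)
Definition is_shortest_length (L n1 n2 : nat) : Prop :=
  (0 < F L n1 n2)%N /\ forall m, (m < L)%N -> F m n1 n2 = 0.

From mathcomp Require Import all_boot all_order all_algebra zify.
Import GRing.Theory Num.Theory.

(* In the coordinates u = x and v = 2y - x, each of E, W, NE, SW changes u and v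
   by +1 or -1, all four sign combinations occurring.  Hence a walk to (n1, n2)
   has at least max(n1, 2 n2 - n1) steps, and a walk of exactly that length
   increases u at every step (it uses only E and NE) when n2 <= n1, resp.
   increases v at every step (only W and NE) when n1 <= n2.  In the first case
   the quadrant constraint is void and the walks are the C(n1, n2) placements of
   the NE steps.  In the second only x >= 0 can fail, and a first-step recursion
   gives C(m, n2) - C(m, n2 + 1) walks, m = 2 n2 - n1, which is the ballot
   number (n1 + 1) / (m + 1) * C(m + 1, n2 + 1). *)

Local Open Scope ring_scope.

Definition move (p : int * int) (s : step) : int * int :=
  (p.1 + (delta s).1, p.2 + (delta s).2).

Definition endpt_from (p : int * int) (ws : seq step) : int * int := foldl move p ws.

Definition in_quadrant_from (p : int * int) (ws : seq step) : bool :=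
  all (fun k => (0 <= (endpt_from p (take k ws)).1) && (0 <= (endpt_from p (take k ws)).2))
      (iota 0 (size ws).+1).

Definition nwalks (m : nat) (p t : int * int) : nat :=
  #|[pred w : m.-tuple step | in_quadrant_from p w && (endpt_from p w == t)]|.

Lemma F_nwalks m n1 n2 : F m n1 n2 = nwalks m (0, 0) (n1%:Z, n2%:Z).
Proof. by []. Qed.

Definition step_dist (p q : int * int) : nat :=
  maxn (absz (q.1 - p.1)%R) (absz (2 * (q.2 - p.2) - (q.1 - p.1))%R).

Lemma step_dist_move p s t : (step_dist p t <= (step_dist (move p s) t).+1)%N.
Proof. by case: p => x y; case: s; rewrite /step_dist /move /=; lia. Qed.

Lemma step_dist_endpt_from p ws : (step_dist p (endpt_from p ws) <= size ws)%N.
Proof.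
elim: ws p => [|s ws IH] p; first by rewrite /step_dist /= !subrr.
by apply: leq_trans (step_dist_move p s _) _; exact: IH.
Qed.

Lemma endpt_from_cons p s ws : endpt_from p (s :: ws) = endpt_from (move p s) ws.
Proof. by []. Qed.

Lemma endpt_from_E_NE p ws :
  (endpt_from p ws).1 = p.1 + (size ws)%:Z -> all (fun s => (s == E) || (s == NE)) ws.
Proof.
elim: ws p => [|s ws IH] p //; rewrite endpt_from_cons /= => u_gap.
have := step_dist_endpt_from (move p s) ws; rewrite /step_dist.
move: (IH (move p s)) u_gap.
by case: s => /= IHs u_gap tail_dist;
  [rewrite eqxx IHs //|exfalso|rewrite eqxx orbT IHs //|exfalso]; lia.
Qed.

Lemma endpt_from_W_NE p ws :
  2 * ((endpt_from p ws).2 - p.2) - ((endpt_from p ws).1 - p.1) = (size ws)%:Z ->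
  all (fun s => (s == W) || (s == NE)) ws.
Proof.
elim: ws p => [|s ws IH] p //; rewrite endpt_from_cons /= => v_gap.
have := step_dist_endpt_from (move p s) ws; rewrite /step_dist.
move: (IH (move p s)) v_gap.
by case: s => /= IHs v_gap tail_dist;
  [exfalso|rewrite eqxx IHs //|rewrite eqxx orbT IHs //|exfalso]; lia.
Qed.

Lemma in_quadrant_from_nil p : in_quadrant_from p [::] = (0 <= p.1) && (0 <= p.2).
Proof. by rewrite /in_quadrant_from /= andbT. Qed.

Lemma in_quadrant_from_cons p s ws :
  in_quadrant_from p (s :: ws) = [&& 0 <= p.1, 0 <= p.2 & in_quadrant_from (move p s) ws].
Proof.
by rewrite /in_quadrant_from /= (iotaDl 1 1) all_map -andbA.
Qed.

Lemma sum_step (f : step -> nat) : (\sum_s f s = f E + f W + f NE + f SW)%N.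
Proof.
rewrite (reindex step_of) /=; last first.
  exists step_to => [i _|s _]; last exact: step_toK.
  by apply: val_inj; case: i => -[|[|[|[|]]]] //= i; rewrite inordK.
by rewrite !big_ord_recl big_ord0 /= addn0 !addnA.
Qed.

Lemma nwalks0 p t : nwalks 0 p t = [&& 0 <= p.1, 0 <= p.2 & p == t].
Proof.
rewrite /nwalks -sum1_card big_mkcond.
rewrite (eq_bigr (fun=> nat_of_bool (in_quadrant_from p [::] && (p == t)))) => [|w _].
  by rewrite big_const card_tuple /= addn0 in_quadrant_from_nil andbA.
by rewrite tuple0.
Qed.

Lemma nwalksS m p t : nwalks m.+1 p t =
  if (0 <= p.1) && (0 <= p.2) then (\sum_s nwalks m (move p s) t)%N else 0%N.
Proof.
pose cons_tuple (sw : step * m.-tuple step) := [tuple of sw.1 :: sw.2].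
have cons_tupleK : bijective cons_tuple.
  exists (fun w : m.+1.-tuple step => (thead w, [tuple of behead w])).
    by case=> s w; congr (_, _); apply: val_inj.
  by move=> w; rewrite [in RHS](tuple_eta w).
rewrite /nwalks -sum1_card big_mkcond (reindex cons_tuple) /=; last first.
  by apply: onW_bij; exact: cons_tupleK.
rewrite -(pair_bigA _ (fun s (w : m.-tuple step) =>
  nat_of_bool (in_quadrant_from p (s :: w) && (endpt_from (move p s) w == t)))) /=.
case: ifP => p_in.
  apply: eq_bigr => s _; rewrite -sum1_card [RHS]big_mkcond; apply: eq_bigr => w _ /=.
  by rewrite in_quadrant_from_cons andbA p_in.
by rewrite big1 // => s _; rewrite big1 // => w _; rewrite in_quadrant_from_cons andbA p_in.
Qed.

Lemma nwalks_far m p t : (m < step_dist p t)%N -> nwalks m p t = 0%N.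
Proof.
move=> far; apply: eq_card0 => w /=; apply/negP => /andP[_ /eqP end_w].
by have := step_dist_endpt_from p w; rewrite end_w size_tuple leqNgt far.
Qed.

Lemma nwalks_outside m p t : ~~ ((0 <= p.1) && (0 <= p.2)) -> nwalks m p t = 0%N.
Proof.
by case: m => [|m] /negbTE p_out; rewrite ?nwalks0 ?nwalksS ?andbA p_out.
Qed.

Lemma nwalks_E_NE m : forall (x y tx ty : int) (k : nat),
  0 <= x -> 0 <= y -> tx = x + m%:Z -> ty = y + k%:Z -> nwalks m (x, y) (tx, ty) = 'C(m, k).
Proof.
elim: m => [|m IH] x y tx ty k x_ge0 y_ge0 tx_eq ty_eq.
  have -> : tx = x by lia.
  by rewrite nwalks0 x_ge0 y_ge0 bin0n /= xpair_eqE eqxx /=; apply/eqP/eqP; lia.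
rewrite nwalksS x_ge0 y_ge0 sum_step.
rewrite [nwalks m (move _ W) _]nwalks_far ?[nwalks m (move _ SW) _]nwalks_far ?addn0;
  try by rewrite /step_dist /=; lia.
have east : nwalks m (move (x, y) E) (tx, ty) = 'C(m, k) by apply: IH; rewrite /=; lia.
case: k ty_eq east => [|k] ty_eq east.
  rewrite [nwalks m (move _ NE) _]nwalks_far ?east ?addn0 ?bin0 //.
  by rewrite /step_dist /=; lia.
have north_east : nwalks m (move (x, y) NE) (tx, ty) = 'C(m, k) by apply: IH; rewrite /=; lia.
by rewrite east north_east binS.
Qed.

(* The subtracted binomial counts, by the reflection principle, the unconstrained
   W/NE walks that reach x = -1. *)
Lemma nwalks_W_NE m : forall (x a w : nat) (px py tx ty : int),
  (a + w = m)%N -> (w <= x + a)%N -> 0 <= py ->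
  px = x%:Z -> tx = x%:Z + a%:Z - w%:Z -> ty = py + a%:Z ->
  (nwalks m (px, py) (tx, ty) + 'C(m, a + x + 1) = 'C(m, a))%N.
Proof.
elim: m => [|m IH] x a w px py tx ty m_aw w_le py_ge0 -> tx_eq ty_eq.
  have -> : (tx, ty) = (x%:Z, py) by congr (_, _); lia.
  have -> : a = 0%N by lia.
  by rewrite nwalks0 py_ge0 eqxx bin0n /= addn1.
rewrite nwalksS py_ge0 /= sum_step.
rewrite [nwalks m (move _ E) _]nwalks_far ?[nwalks m (move _ SW) _]nwalks_far ?addn0 /=;
  try by rewrite /step_dist /=; lia.
have west : (nwalks m (move (x%:Z, py) W) (tx, ty) + 'C(m, a + x) = 'C(m, a))%N.
  case: x w_le tx_eq => [|x] w_le tx_eq; first by rewrite nwalks_outside // addn0.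
  case: w m_aw w_le tx_eq => [|w] m_aw w_le tx_eq.
    by rewrite nwalks_far ?bin_small ?addn0 //; rewrite ?/step_dist /=; lia.
  by rewrite addnS -[(a + x).+1]addn1; apply: (IH x a w); rewrite /=; lia.
case: a m_aw w_le west ty_eq tx_eq => [|a] m_aw w_le west ty_eq tx_eq.
  rewrite [nwalks m (move _ NE) _]nwalks_far; last by rewrite /step_dist /=; lia.
  have : 'C(m, x.+1) = 0%N by rewrite bin_small //; lia.
  by rewrite !add0n addn1 binS !bin0 in west * => ?; lia.
have north_east : (nwalks m (move (x%:Z, py) NE) (tx, ty) + 'C(m, a + x.+1 + 1) = 'C(m, a))%N.
  by apply: (IH x.+1 a w); rewrite /=; lia.
rewrite ?addSn ?addnS ?addn0 in west north_east *.
by rewrite !binS; lia.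
Qed.

Lemma ballot_binomial k j : (j <= k)%N ->
  ((k + j).+1 * ('C(k + j, k) - 'C(k + j, k.+1)) = (k - j).+1 * 'C((k + j).+1, k.+1))%N.
Proof.
move=> le_jk; apply/eqP; rewrite -(eqn_pmul2l (ltn0Sn k)); apply/eqP.
rewrite mulnCA mulnBr mul_bin_left addKn -mulnBl -subSn // mulnCA.
by rewrite (mul_bin_diag (k + j).+1) mulnCA.
Qed.

Lemma is_shortest_length_step_dist L n1 n2 :
  L = step_dist (0, 0) (n1%:Z, n2%:Z) -> (0 < F L n1 n2)%N -> is_shortest_length L n1 n2.
Proof. by move=> -> F_gt0; split=> // m lt_m; rewrite F_nwalks nwalks_far. Qed.

Local Close Scope ring_scope.

Theorem theorem2 (n1 n2 : nat) :
  ((n2 <= n1)%N ->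
     [/\ is_shortest_length n1 n1 n2,
         (forall w : n1.-tuple step, qwalk n1 n2 w ->
            all (fun s => (s == E) || (s == NE)) w)
       & F n1 n1 n2 = 'C(n1, n2)]) /\
  ((n1 <= n2)%N ->
     [/\ is_shortest_length (2 * n2 - n1) n1 n2,
         (forall w : (2 * n2 - n1).-tuple step, qwalk n1 n2 w ->
            all (fun s => (s == W) || (s == NE)) w)
       & ((F (2 * n2 - n1) n1 n2)%:R : rat)%R =
           ((n1.+1)%:R / ((2 * n2 - n1).+1)%:R * ('C((2 * n2 - n1).+1, n2.+1))%:R
             : rat)%R]).
Proof.
split=> le_n.
  have F_E_NE : F n1 n1 n2 = 'C(n1, n2) by rewrite F_nwalks; apply: nwalks_E_NE; lia.
  split=> //.
  - apply: is_shortest_length_step_dist; first by rewrite /step_dist /=; lia.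
    by rewrite F_E_NE bin_gt0.
  - move=> w /andP[_ /eqP end_w]; apply: (@endpt_from_E_NE (0, 0)%R).
    by rewrite [endpt_from _ _]end_w size_tuple.
set m := 2 * n2 - n1.
have F_W_NE : F m n1 n2 + 'C(m, n2.+1) = 'C(m, n2).
  have := @nwalks_W_NE m 0 n2 (n2 - n1) 0 0 n1 n2; rewrite addn0 addn1; apply; lia.
have F_ballot : m.+1 * F m n1 n2 = n1.+1 * 'C(m.+1, n2.+1).
  have m_eq : m = n2 + (n2 - n1) by rewrite /m; lia.
  rewrite -[F _ _ _](addnK 'C(m, n2.+1)) F_W_NE m_eq ballot_binomial ?leq_subr //.
  by rewrite subKn.
split.
- apply: is_shortest_length_step_dist; first by rewrite /step_dist /m /=; lia.
  have : 0 < m.+1 * F m n1 n2 by rewrite F_ballot muln_gt0 bin_gt0 /m; lia.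
  by rewrite muln_gt0 => /andP[].
- move=> w /andP[_ /eqP end_w]; apply: (@endpt_from_W_NE (0, 0)%R).
  by rewrite [endpt_from _ _]end_w size_tuple /m /=; lia.
- by rewrite mulrAC -natrM -F_ballot natrM mulrC mulKf // pnatr_eq0.
Qed.
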